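(* Let $(E_{-1},E_0,\partial,\rho,S,\circ,\Omega)$ be an $\mathrm{LWX}$ $2$-algebroid over $M$. Let $[\![e_1,e_2]\!]=\frac12(e_1\circ e_2-e_2\circ e_1)$, $J(e_1,e_2,e_3)=[\![[\![e_1,e_2]\!],e_3]\!]+[\![[\![e_2,e_3]\!],e_1]\!]+[\![[\![e_3,e_1]\!],e_2]\!]$ for $e_i\in\Gamma(\mathcal E)$, and define $T:\Gamma(E_0)\times\Gamma(E_0)\times\Gamma(E_{-1})\to C^\infty(M)$ by $$T(e^0_1,e^0_2,e^1)=\tfrac16\big(S(e^0_1,[\![e^0_2,e^1]\!])+S(e^1,[\![e^0_1,e^0_2]\!])+S(e^0_2,[\![e^1,e^0_1]\!])\big).$$ Then for all $e^0,e^0_1,e^0_2,e^0_3\in\Gamma(E_0)$ and $e^1,e^1_1,e^1_2\in\Gamma(E_{-1})$: $$J(e^0_1,e^0_2,e^0_3)=-\partial\Omega(e^0_1,e^0_2,e^0_3),\qquad J(e^0_1,e^0_2,e^1)=\mathcal D T(e^0_1,e^0_2,e^1)-\Omega(e^0_1,e^0_2,\partial e^1),$$ $$T(\partial e^1_1,e^0,e^1_2)=-T(\partial e^1_2,e^0,e^1_1).$$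
   Context: A Leibniz $2$-algebra $(V_{-1},V_0,d,l_2,l_3)$ consists of a complex of real vector spaces $d:V_{-1}\to V_0$, bilinear maps $l_2:V_{-i}\times V_{-j}\to V_{-i-j}$ for $0\le i+j\le 1$, and a trilinear map $l_3:V_0\times V_0\times V_0\to V_{-1}$ such that for all $w,x,y,z\in V_0$, $m,n\in V_{-1}$: (a) $d\,l_2(x,m)=l_2(x,dm)$; (b) $d\,l_2(m,x)=l_2(dm,x)$; (c) $l_2(dm,n)=l_2(m,dn)$; (d) $d\,l_3(x,y,z)=l_2(x,l_2(y,z))-l_2(l_2(x,y),z)-l_2(y,l_2(x,z))$; (e1) $l_3(x,y,dm)=l_2(x,l_2(y,m))-l_2(l_2(x,y),m)-l_2(y,l_2(x,m))$; (e2) $l_3(x,dm,y)=l_2(x,l_2(m,y))-l_2(l_2(x,m),y)-l_2(m,l_2(x,y))$; (e3) $l_3(dm,x,y)=l_2(m,l_2(x,y))-l_2(l_2(m,x),y)-l_2(x,l_2(m,y))$; (f) $l_2(w,l_3(x,y,z))-l_2(x,l_3(w,y,z))+l_2(y,l_3(w,x,z))+l_2(l_3(w,x,y),z)-l_3(l_2(w,x),y,z)-l_3(x,l_2(w,y),z)-l_3(x,y,l_2(w,z))+l_3(w,l_2(x,y),z)+l_3(w,y,l_2(x,z))-l_3(w,x,l_2(y,z))=0$. An $\mathrm{LWX}$ $2$-algebroid $(E_{-1},E_0,\partial,\rho,S,\circ,\Omega)$ over a manifold $M$ consists of vector bundles $E_{-1},E_0$ over $M$ with $\mathcal E=E_{-1}\oplus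 E_0$; a nondegenerate symmetric bilinear form $S$ on $\mathcal E$ for which $E_0$ and $E_{-1}$ are both isotropic; an $\mathbb R$-bilinear operation $\circ$ on $\Gamma(\mathcal E)$ mapping $\Gamma(E_{-i})\times\Gamma(E_{-j})\to\Gamma(E_{-(i+j)})$ for $0\le i+j\le 1$ (and zero on $\Gamma(E_{-1})\times\Gamma(E_{-1})$), skew-symmetric on $\Gamma(E_0)\times\Gamma(E_0)$; an $E_{-1}$-valued $3$-form $\Omega$ on $E_0$; bundle maps $\partial:E_{-1}\to E_0$ and $\rho:E_0\to TM$ ($\rho$ is extended by zero to $E_{-1}$); such that: (i) $(\Gamma(E_{-1}),\Gamma(E_0),\partial,\circ,\Omega)$ is a Leibniz $2$-algebra (with $d=\partial$, $l_2=\circ$, $l_3=\Omega$); (ii) $e\circ e=\frac12\mathcal D S(e,e)$ for all $e\in\Gamma(\mathcal E)$, where $\mathcal D:C^\infty(M)\to\Gamma(E_{-1})$ is defined by $S(\mathcal D f,e^0)=\rho(e^0)(f)$ for all $e^0\in\Gamma(E_0)$; (iii) $S(\partial e^1_1,e^1_2)=S(e^1_1,\partial e^1_2)$ for $e^1_1,e^1_2\in\Gamma(E_{-1})$; (iv) $\rho(e_1)S(e_2,e_3)=S(e_1\circ e_2,e_3)+S(e_2,e_1\circ e_3)$ for all $e_1,e_2,e_3\in\Gamma(\mathcal E)$; (v) $S(\Omega(e^0_1,e^0_2,e^0_3),e^0_4)=-S(e^0_3,\Omega(e^0_1,e^0_2,e^0_4))$ for all $e^0_i\in\Gamma(E_0)$.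 *)

(* Abstract algebraic rendering of an LWX 2-algebroid:
   C^oo(M) is a commutative R-algebra A, sections Gamma(E_{-1}), Gamma(E_0)
   are A-modules E1, E0, and Gamma(calE) = Gamma(E_{-1}) (+) Gamma(E_0) is the
   product E1 * E0 (first component = degree -1 part). *)
From HB Require Import structures.
From mathcomp Require Import all_boot all_order all_algebra.
Set Implicit Arguments. Unset Strict Implicit. Unset Printing Implicit Defensive.
Import Order.TTheory GRing.Theory Num.Theory.
Local Open Scope ring_scope.

Section LWX.
Variables (R : realFieldType) (A : comAlgType R) (E1 E0 : lmodType A).

Definition rsc (V : lmodType A) (r : R) (v : V) : V := (r%:A : A) *: v.

Definition reduced_fun_ring : Prop := forall g : A, g * g = 0 -> g = 0.

Record LWX2 := {
  dd : E1 -> E0;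
  rho : E0 -> A -> A;                  (* anchor: rho e is a vector field acting on C^oo(M) *)
  (* the pairing S restricted to E_0 x E_{-1}; E_0, E_{-1} isotropic *)
  pair : E0 -> E1 -> A;
  (* graded components of the bracket o *)
  c00 : E0 -> E0 -> E0;
  c01 : E0 -> E1 -> E1;
  c10 : E1 -> E0 -> E1;
  Om : E0 -> E0 -> E0 -> E1;
  DD : A -> E1;

  dd_lin : forall (f : A) m n, dd (f *: m + n) = f *: dd m + dd n;
  rho_lin : forall (f : A) x y g, rho (f *: x + y) g = f * rho x g + rho y g;
  rho_add : forall x g h, rho x (g + h) = rho x g + rho x h;
  rho_scale : forall x (r : R) g, rho x (r *: g) = r *: rho x g;
  rho_mul : forall x g h, rho x (g * h) = g * rho x h + h * rho x g;
  pair_linl : forall (f : A) x y m, pair (f *: x + y) m = f * pair x m + pair y m;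
  pair_linr : forall (f : A) x m n, pair x (f *: m + n) = f * pair x m + pair x n;
  c00_linl : forall (r : R) x y z, c00 (rsc r x + y) z = rsc r (c00 x z) + c00 y z;
  c00_linr : forall (r : R) x y z, c00 x (rsc r y + z) = rsc r (c00 x y) + c00 x z;
  c01_linl : forall (r : R) x y m, c01 (rsc r x + y) m = rsc r (c01 x m) + c01 y m;
  c01_linr : forall (r : R) x m n, c01 x (rsc r m + n) = rsc r (c01 x m) + c01 x n;
  c10_linl : forall (r : R) m n x, c10 (rsc r m + n) x = rsc r (c10 m x) + c10 n x;
  c10_linr : forall (r : R) m x y, c10 m (rsc r x + y) = rsc r (c10 m x) + c10 m y;
  c00_skew : forall x y, c00 x y = - c00 y x;
  Om_lin1 : forall (f : A) x x' y z, Om (f *: x + x') y z = f *: Om x y z + Om x' y z;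
  Om_lin2 : forall (f : A) x y y' z, Om x (f *: y + y') z = f *: Om x y z + Om x y' z;
  Om_lin3 : forall (f : A) x y z z', Om x y (f *: z + z') = f *: Om x y z + Om x y z';
  Om_skew12 : forall x y z, Om x y z = - Om y x z;
  Om_skew23 : forall x y z, Om x y z = - Om x z y;
  Om_alt12 : forall x z, Om x x z = 0;
  Om_alt23 : forall x y, Om x y y = 0;
  (* S nondegenerate (given isotropy of E_0, E_{-1}, on both sides) *)
  pair_nondeg0 : forall x, (forall m, pair x m = 0) -> x = 0;
  pair_nondeg1 : forall m, (forall x, pair x m = 0) -> m = 0;
  DD_def : forall f x, pair x (DD f) = rho x f;

  ax_a : forall x m, dd (c01 x m) = c00 x (dd m);
  ax_b : forall m x, dd (c10 m x) = c00 (dd m) x;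
  ax_c : forall m n, c01 (dd m) n = c10 m (dd n);
  ax_d : forall x y z,
    dd (Om x y z) = c00 x (c00 y z) - c00 (c00 x y) z - c00 y (c00 x z);
  ax_e1 : forall x y m,
    Om x y (dd m) = c01 x (c01 y m) - c01 (c00 x y) m - c01 y (c01 x m);
  ax_e2 : forall x y m,
    Om x (dd m) y = c01 x (c10 m y) - c10 (c01 x m) y - c10 m (c00 x y);
  ax_e3 : forall x y m,
    Om (dd m) x y = c10 m (c00 x y) - c10 (c10 m x) y - c01 x (c10 m y);
  ax_f : forall w x y z,
    c01 w (Om x y z) - c01 x (Om w y z) + c01 y (Om w x z) + c10 (Om w x y) z
    - Om (c00 w x) y z - Om x (c00 w y) z - Om x y (c00 w z)
    + Om w (c00 x y) z + Om w y (c00 x z) - Om w x (c00 y z) = 0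
}.

Variable L : LWX2.

Definition secE := (E1 * E0)%type.
Definition inj1 (m : E1) : secE := (m, 0).
Definition inj0 (x : E0) : secE := (0, x).

(* the full symmetric form S on calE (E_0, E_{-1} isotropic) *)
Definition SS (e e' : secE) : A := pair L e.2 e'.1 + pair L e'.2 e.1.
(* the full bracket o on calE (zero on E_{-1} x E_{-1}) *)
Definition circ (e e' : secE) : secE :=
  (c01 L e.2 e'.1 + c10 L e.1 e'.2, c00 L e.2 e'.2).
Definition rhoE (e : secE) : A -> A := rho L e.2.

Definition skb (e e' : secE) : secE := rsc (2^-1) (circ e e' - circ e' e).
Definition Jac (e1 e2 e3 : secE) : secE :=
  skb (skb e1 e2) e3 + skb (skb e2 e3) e1 + skb (skb e3 e1) e2.
Definition Tfun (x1 x2 : E0) (m : E1) : A :=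
  (6^-1 : R)%:A * (SS (inj0 x1) (skb (inj0 x2) (inj1 m))
                 + SS (inj1 m) (skb (inj0 x1) (inj0 x2))
                 + SS (inj0 x2) (skb (inj1 m) (inj0 x1))).

Definition LWX_axioms : Prop :=
  [/\ forall e : secE, circ e e = inj1 (rsc (2^-1) (DD L (SS e e))),
      forall m1 m2 : E1, SS (inj0 (dd L m1)) (inj1 m2) = SS (inj1 m1) (inj0 (dd L m2)),
      forall e1 e2 e3 : secE,
        rhoE e1 (SS e2 e3) = SS (circ e1 e2) e3 + SS e2 (circ e1 e3)
    & forall x1 x2 x3 x4 : E0,
        SS (inj1 (Om L x1 x2 x3)) (inj0 x4) = - SS (inj0 x3) (inj1 (Om L x1 x2 x4))].

End LWX.
Arguments reduced_fun_ring {R} A.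
Arguments inj1 {R A E1 E0} m.
Arguments inj0 {R A E1 E0} x.

From HB Require Import structures.
From mathcomp Require Import all_boot all_order all_algebra ring.
Import Order.TTheory GRing.Theory Num.Theory.
Local Open Scope ring_scope.
Set Implicit Arguments. Unset Strict Implicit.

(* Polarising axiom (ii) gives m o x = D S(x, m) - x o m, so on mixed arguments
   [[x, m]] = x o m - 1/2 D S(x, m), and axiom (iv) computes S(z, x o m) through
   the anchor. Pairing (d) and (e1) with sections, the Omega terms cancel by (iii)
   and (v), which shows that rho preserves brackets on functions S(w, n); hence
   x o D S(w, n) = D (rho x S(w, n)) and rho (dd m) kills S(w, n). With these rules
   each Jacobiator is computed explicitly, and sections of E_{-1} are compared
   through their pairings with E_0 (nondegeneracy of S), where everything becomes
   a ring identity in C^oo(M). *)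

Section AdditiveMap.
Variables (U W : zmodType) (f : U -> W).
Hypothesis fD : {morph f : u v / u + v}.

Lemma additive_map0 : f 0 = 0.
Proof. by apply: (@addrI _ (f 0)); rewrite -fD !addr0. Qed.

Lemma additive_mapN u : f (- u) = - f u.
Proof. by apply: (@addrI _ (f u)); rewrite -fD !subrr additive_map0. Qed.

End AdditiveMap.

Section LWXAlgebroid.
Variables (R : realFieldType) (A : comAlgType R) (E1 E0 : lmodType A).
Variable L : LWX2 E1 E0.

Local Notation half := ((2^-1 : R)%:A : A).
Local Notation pr := (pair L).

Lemma rsc1 (V : lmodType A) (v : V) : rsc 1 v = v.
Proof. by rewrite /rsc !scale1r. Qed.

Lemma half_add_half : half + half = 1.
Proof. by rewrite -scalerDl -[2^-1]mul1r -splitr scale1r. Qed.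

Lemma scale_half_double (V : lmodType A) (v : V) : half *: (v + v) = v.
Proof. by rewrite scalerDr -scalerDl half_add_half scale1r. Qed.

Lemma c00Dl x y z : c00 L (x + y) z = c00 L x z + c00 L y z.
Proof. by have := c00_linl L 1 x y z; rewrite !rsc1. Qed.
Lemma c00Dr x y z : c00 L x (y + z) = c00 L x y + c00 L x z.
Proof. by have := c00_linr L 1 x y z; rewrite !rsc1. Qed.
Lemma c01Dl x y m : c01 L (x + y) m = c01 L x m + c01 L y m.
Proof. by have := c01_linl L 1 x y m; rewrite !rsc1. Qed.
Lemma c01Dr x m n : c01 L x (m + n) = c01 L x m + c01 L x n.
Proof. by have := c01_linr L 1 x m n; rewrite !rsc1. Qed.
Lemma c10Dl m n x : c10 L (m + n) x = c10 L m x + c10 L n x.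
Proof. by have := c10_linl L 1 m n x; rewrite !rsc1. Qed.
Lemma c10Dr m x y : c10 L m (x + y) = c10 L m x + c10 L m y.
Proof. by have := c10_linr L 1 m x y; rewrite !rsc1. Qed.
Lemma ddD m n : dd L (m + n) = dd L m + dd L n.
Proof. by have := dd_lin L 1 m n; rewrite !scale1r. Qed.
Lemma pairDl x y m : pr (x + y) m = pr x m + pr y m.
Proof. by have := pair_linl L 1 x y m; rewrite scale1r !mul1r. Qed.
Lemma pairDr x m n : pr x (m + n) = pr x m + pr x n.
Proof. by have := pair_linr L 1 x m n; rewrite scale1r !mul1r. Qed.

Lemma c00_0l x : c00 L 0 x = 0. Proof. exact: additive_map0 (fun u v => c00Dl u v x). Qed.
Lemma c00_0r x : c00 L x 0 = 0. Proof. exact: additive_map0 (c00Dr x). Qed.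
Lemma c01_0l m : c01 L 0 m = 0. Proof. exact: additive_map0 (fun u v => c01Dl u v m). Qed.
Lemma c01_0r x : c01 L x 0 = 0. Proof. exact: additive_map0 (c01Dr x). Qed.
Lemma c10_0l x : c10 L 0 x = 0. Proof. exact: additive_map0 (fun u v => c10Dl u v x). Qed.
Lemma c10_0r m : c10 L m 0 = 0. Proof. exact: additive_map0 (c10Dr m). Qed.
Lemma pair0l m : pr 0 m = 0. Proof. exact: additive_map0 (fun u v => pairDl u v m). Qed.
Lemma pair0r x : pr x 0 = 0. Proof. exact: additive_map0 (pairDr x). Qed.

Lemma c00Nr x y : c00 L x (- y) = - c00 L x y. Proof. exact: (additive_mapN (c00Dr x)). Qed.
Lemma c01Nr x m : c01 L x (- m) = - c01 L x m. Proof. exact: (additive_mapN (c01Dr x)). Qed.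
Lemma pairNl x m : pr (- x) m = - pr x m.
Proof. exact: (@additive_mapN _ _ (pr^~ m) (fun u v => pairDl u v m)). Qed.
Lemma pairNr x m : pr x (- m) = - pr x m. Proof. exact: (additive_mapN (pairDr x)). Qed.
Lemma rhoNf x g : rho L x (- g) = - rho L x g. Proof. exact: (additive_mapN (rho_add L x)). Qed.

Lemma c01Zr x (r : R) m : c01 L x (r%:A *: m) = r%:A *: c01 L x m.
Proof. by have := c01_linr L r x m 0; rewrite /rsc !addr0 c01_0r addr0. Qed.

Lemma pairZr f x m : pr x (f *: m) = f * pr x m.
Proof. by have := pair_linr L f x m 0; rewrite !addr0 pair0r addr0. Qed.

Lemma rho1 x : rho L x 1 = 0.
Proof.
have := rho_mul L x 1 1; rewrite !mul1r => h.
by apply: (@addrI _ (rho L x 1)); rewrite addr0 -h.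
Qed.

Lemma rhoCM x r g : rho L x (r%:A * g) = r%:A * rho L x g.
Proof. by rewrite rho_mul rho_scale rho1 scaler0 mulr0 addr0. Qed.

Lemma eq_pairr (u v : E1) : (forall z, pr z u = pr z v) -> u = v.
Proof.
move=> uv; apply/eqP; rewrite -subr_eq0; apply/eqP; apply: (@pair_nondeg1 _ _ _ _ L) => z.
by rewrite pairDr pairNr uv subrr.
Qed.

Lemma DDD f g : DD L (f + g) = DD L f + DD L g.
Proof. by apply: eq_pairr => z; rewrite pairDr !DD_def rho_add. Qed.

Lemma inj0D x y : inj0 (x + y) = inj0 x + inj0 y :> secE E1 E0.
Proof. by apply: injective_projections; rewrite /= ?addr0. Qed.
Lemma inj0N x : inj0 (- x) = - inj0 x :> secE E1 E0.
Proof. by apply: injective_projections; rewrite /= ?oppr0. Qed.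
Lemma inj1D m n : inj1 (m + n) = inj1 m + inj1 n :> secE E1 E0.
Proof. by apply: injective_projections; rewrite /= ?addr0. Qed.
Lemma inj1N m : inj1 (- m) = - inj1 m :> secE E1 E0.
Proof. by apply: injective_projections; rewrite /= ?oppr0. Qed.

Lemma skb_inj0_inj0 x y : skb L (inj0 x) (inj0 y) = inj0 (c00 L x y).
Proof.
apply: injective_projections; rewrite /skb /rsc /circ /=.
  by rewrite !(c01_0r, c10_0l, c01_0l) !addr0 subrr scaler0.
by rewrite (c00_skew L y x) opprK scale_half_double.
Qed.

Lemma Jac_inj0_inj0_inj0 x1 x2 x3 :
  Jac L (inj0 x1) (inj0 x2) (inj0 x3) = - inj0 (dd L (Om L x1 x2 x3)).
Proof.
rewrite /Jac !skb_inj0_inj0 -!inj0D -inj0N ax_d; congr inj0.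
rewrite (c00_skew L (c00 L x2 x3)) (c00_skew L (c00 L x3 x1)) (c00_skew L x3) c00Nr opprK.
by rewrite opprB opprB addrC.
Qed.

Section LWXLaws.
Hypothesis HL : LWX_axioms L.

Lemma c10E m x : c10 L m x = DD L (pr x m) - c01 L x m.
Proof.
case: HL => circ_diag _ _ _; have := f_equal fst (circ_diag (m, x)).
by rewrite /circ /SS /inj1 /rsc /= DDD scale_half_double => <-; rewrite addrAC subrr add0r.
Qed.

Lemma rho_pair x z m : rho L x (pr z m) = pr (c00 L x z) m + pr z (c01 L x m).
Proof.
case: HL => _ _ inv _; have := inv (inj0 x) (inj0 z) (inj1 m).
by rewrite /circ /SS /rhoE /= !(c01_0r, c10_0l, c00_0r, pair0r, pair0l, addr0).
Qed.

Lemma pair_c01 z x m : pr z (c01 L x m) = rho L x (pr z m) - pr (c00 L x z) m.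
Proof. by rewrite rho_pair [pr (c00 L x z) m + _]addrC addrK. Qed.

Lemma pair_c10 z m x : pr z (c10 L m x) = rho L z (pr x m) - pr z (c01 L x m).
Proof. by rewrite c10E pairDr pairNr DD_def. Qed.

Lemma pair_ddC m1 m2 : pr (dd L m1) m2 = pr (dd L m2) m1.
Proof.
case: HL => _ dd_sym _ _; have := dd_sym m1 m2.
by rewrite /SS /= !pair0l add0r addr0.
Qed.

Lemma pair_OmC x1 x2 x3 x4 : pr x4 (Om L x1 x2 x3) = - pr x3 (Om L x1 x2 x4).
Proof.
case: HL => _ _ _ Om_inv; have := Om_inv x1 x2 x3 x4.
by rewrite /SS /= !pair0l add0r addr0.
Qed.

Lemma rho_c00_pair x y w n :
  rho L (c00 L x y) (pr w n) = rho L x (rho L y (pr w n)) - rho L y (rho L x (pr w n)).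
Proof.
(* Expanded by (iv), the claim is the sum of (d) paired with n and (e1) paired
   with w, which vanishes by (iii) and (v). *)
have Om_dd : pr (dd L (Om L x y w)) n + pr w (Om L x y (dd L n)) = 0.
  by rewrite pair_ddC pair_OmC addNr.
apply/eqP; rewrite -subr_eq0 -oppr0 -Om_dd ax_d ax_e1.
rewrite !(pairDl, pairNl, pairDr, pairNr) !rho_pair !rho_add !rho_pair.
by apply/eqP; ring.
Qed.

Lemma c01_DD_pair x w n : c01 L x (DD L (pr w n)) = DD L (rho L x (pr w n)).
Proof. by apply: eq_pairr => z; rewrite pair_c01 !DD_def rho_c00_pair; ring. Qed.

Lemma dd_DD_pair x m : dd L (DD L (pr x m)) = 0.
Proof. by rewrite -[DD L _](subrK (c01 L x m)) -c10E addrC ddD ax_a ax_b c00_skew addNr. Qed.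

Lemma rho_dd_pair m x n : rho L (dd L m) (pr x n) = 0.
Proof. by rewrite -DD_def pair_ddC dd_DD_pair pair0l. Qed.

Lemma skb_inj0_inj1 x m :
  skb L (inj0 x) (inj1 m) = inj1 (c01 L x m - half *: DD L (pr x m)).
Proof.
apply: injective_projections; rewrite /skb /rsc /circ /=.
  by rewrite c10_0r c01_0l c10E !add0r addr0 opprB addrA scalerBr scale_half_double.
by rewrite c00_0r c00_0l subrr scaler0.
Qed.

Lemma skb_inj1_inj0 m x :
  skb L (inj1 m) (inj0 x) = inj1 (half *: DD L (pr x m) - c01 L x m).
Proof.
apply: injective_projections; rewrite /skb /rsc /circ /=.
  by rewrite c10_0r c01_0l c10E !add0r addr0 -addrA -opprD scalerBr scale_half_double.
by rewrite c00_0r c00_0l subrr scaler0.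
Qed.

Lemma TfunE x y m : Tfun L x y m =
  half * (pr (c00 L x y) m + half * (rho L y (pr x m) - rho L x (pr y m))).
Proof.
have sixth_mul3 : (6^-1 : R)%:A * 3%:R = half.
  by rewrite -!in_algE -(rmorph_nat (in_alg A)) -rmorphM; congr (in_alg A _); field.
have sixth_mul_3half : (6^-1 : R)%:A * (1 + half) = half * half.
  by rewrite -!in_algE -(rmorph1 (in_alg A)) -rmorphD -!rmorphM; congr (in_alg A _); field.
rewrite /Tfun skb_inj0_inj1 skb_inj0_inj0 skb_inj1_inj0 /SS /=.
rewrite !(pair0l, addr0, add0r, pairDr, pairNr, pairZr, pair_c01, DD_def).
rewrite (c00_skew L y x) pairNl.
transitivity ((6^-1 : R)%:A * 3%:R * pr (c00 L x y) m +
  (6^-1 : R)%:A * (1 + half) * (rho L y (pr x m) - rho L x (pr y m))); first by ring.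
by rewrite sixth_mul3 sixth_mul_3half; ring.
Qed.

Lemma Jac_inj0_inj0_inj1 x y m :
  Jac L (inj0 x) (inj0 y) (inj1 m)
    = inj1 (DD L (Tfun L x y m)) - inj1 (Om L x y (dd L m)).
Proof.
rewrite /Jac skb_inj0_inj0 !skb_inj0_inj1 !skb_inj1_inj0 -inj1N -!inj1D; congr inj1.
rewrite ax_e1 !(c01Dr, c01Nr, c01Zr, c01_DD_pair) TfunE.
apply: eq_pairr => z.
rewrite !(pairDr, pairNr, pairZr, DD_def, rho_add, rhoNf, rhoCM, pair_c01).
rewrite (c00_skew L y x) pairNl rhoNf.
ring.
Qed.

Lemma pair_c00_dd_sym x m1 m2 :
  pr (c00 L (dd L m1) x) m2 + pr (c00 L (dd L m2) x) m1 = - rho L x (pr (dd L m1) m2).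
Proof.
rewrite -ax_b pair_ddC pair_c10 rho_dd_pair pair_c01 (c00_skew L x) pairNl pair_ddC.
by rewrite opprK sub0r opprD subrK.
Qed.

Lemma Tfun_dd_skew x m1 m2 : Tfun L (dd L m1) x m2 = - Tfun L (dd L m2) x m1.
Proof.
rewrite !TfunE !rho_dd_pair !subr0 (pair_ddC m2 m1).
set s := rho L x (pr (dd L m1) m2).
have -> : pr (c00 L (dd L m1) x) m2 = - ((half + half) * s) - pr (c00 L (dd L m2) x) m1.
  by rewrite half_add_half mul1r -pair_c00_dd_sym addrK.
ring.
Qed.

End LWXLaws.
End LWXAlgebroid.

Unset Implicit Arguments. Set Strict Implicit.

Theorem mainTheorem4 (R : realFieldType) (A : comAlgType R) (E1 E0 : lmodType A)
  (HA : reduced_fun_ring A) (L : LWX2 E1 E0) (HL : LWX_axioms L) :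
  (forall x1 x2 x3 : E0,
     Jac L (inj0 x1) (inj0 x2) (inj0 x3) = - inj0 (dd L (Om L x1 x2 x3))) /\
  (forall (x1 x2 : E0) (m : E1),
     Jac L (inj0 x1) (inj0 x2) (inj1 m)
       = inj1 (DD L (Tfun L x1 x2 m)) - inj1 (Om L x1 x2 (dd L m))) /\
  (forall (x : E0) (m1 m2 : E1),
     Tfun L (dd L m1) x m2 = - Tfun L (dd L m2) x m1).
Proof.
split; first exact: Jac_inj0_inj0_inj0.
split; first exact: Jac_inj0_inj0_inj1.
exact: Tfun_dd_skew.
Qed.
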